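(* Define, for $x\in\mathbb{R}$, $$f_{U|-1}(x)=\frac{0.5}{\sqrt{2\pi}}e^{-(x+2)^{2}}+\frac{0.5}{\sqrt{2\pi}}e^{-x^{2}},\qquad f_{U|+1}(x)=\frac{0.5}{\sqrt{2\pi}}e^{-(x-2)^{2}}+\frac{0.5}{\sqrt{2\pi}}e^{-x^{2}},$$ and let $\Phi(t)=1$ for $t\ge 0$ and $\Phi(t)=0$ for $t<0$. Then there does not exist a continuous function $\Psi:\mathbb{R}\times\mathbb{R}\to[0,\infty)$, $(v,u)\mapsto\Psi(v|u)$, satisfying all three of the following conditions: (1) for every fixed $u\in\mathbb{R}$, $v\mapsto\Psi(v|u)$ is a probability density function on $\mathbb{R}$; (2) the quantity $\int_{-\infty}^{+\infty}\left|\int_{-\infty}^{t}\Psi(v|u)\,dv-\Phi(t-u)\right|^{2}dt$, as $u$ ranges over $\mathbb{R}$, has a strictly positive lower bound (i.e., there is $c>0$ with this quantity $\ge c$ for every $u\in\mathbb{R}$); (3) for each $\mathsf{x}_1\in\{-1,+1\}$ and every $v\in\mathbb{R}$, $\int_{-\infty}^{+\infty}f_{U|\mathsf{x}_1}(u)\Psi(v|u)\,du=f_{U|\mathsf{x}_1}(v)$.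
   Context: This is the ''non-manipulability'' of the following channel: $X_1,X_2$ are independent and uniform on $\{-1,+1\}$, $N_r$ is noise independent of them with density proportional to $e^{-x^2}$, and the relay receives $U=X_1+X_2+N_r$; $f_{U|\mathsf{x}_1}$ is (up to the printed normalizing constant, which does not affect the claim) the conditional density of $U$ given $X_1=\mathsf{x}_1$. $\Psi(v|u)$ is interpreted as a (memoryless) rule by which the relay, having received $u$, produces a forwarded value $v$; condition (2) says the rule is uniformly bounded away from forwarding $u$ unchanged. *)

From mathcomp Require Import all_boot all_order all_algebra.
From mathcomp Require Import all_classical all_reals all_analysis.
Import Order.TTheory GRing.Theory Num.Theory.
Import numFieldNormedType.Exports.
Local Open Scope classical_set_scope.
Local Open Scope ring_scope.

(* f_{U|x1}(x) = 0.5/sqrt(2 pi) e^{-(x - 2 x1)^2} + 0.5/sqrt(2 pi) e^{-x^2};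
   for x1 = -1 this is the (x+2) version, for x1 = +1 the (x-2) version. *)
Definition fU (R : realType) (x1 x : R) : R :=
  (1 / 2) / Num.sqrt (2 * pi) * expR (- (x - 2 * x1) ^+ 2)
  + (1 / 2) / Num.sqrt (2 * pi) * expR (- x ^+ 2).

Definition Phi (R : realType) (t : R) : R := if 0 <= t then 1 else 0.

Definition is_pdf (R : realType) (g : R -> R) : Prop :=
  (forall v, 0 <= g v) /\ measurable_fun setT g /\
  (\int[(@lebesgue_measure R)]_(v in setT) (g v)%:E = 1)%E.
Arguments fU {R}.
Arguments Phi {R}.
Arguments is_pdf {R}.

From mathcomp Require Import all_boot all_order all_algebra.
From mathcomp Require Import all_classical all_reals all_analysis.
From mathcomp Require Import measurable_realfun ring lra.
Import Order.TTheory GRing.Theory Num.Theory.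
Import numFieldNormedType.Exports.
Local Open Scope classical_set_scope.
Local Open Scope ring_scope.

(* Write r := f_{U|-1}, q := f_{U|+1}, p := r + q and h := q / p, so that
   0 <= h <= 1.  Condition (3) says that r and q, hence p, are invariant
   densities of the kernel Psi.  Expanding the square,
     int int p(u) Psi(v|u) (h u - h v)^2 du dv
       = int p h^2 - 2 int q h + int p h^2 = 0,
   because by invariance, Tonelli and int Psi(v|u) dv = 1 each of the three
   terms equals the finite number int p h^2.  The integrand is continuous and
   nonnegative, so it vanishes identically: h u = h v whenever Psi(v|u) > 0.
   Since Psi(.|0) is a density, Psi(v0|0) > 0 for some v0 <> 0; then
   h v0 = h 0 = 1/2, i.e. f_{U|-1}(v0) = f_{U|+1}(v0), which forces v0 = 0. *)

Section caratheodory.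
Context {d : measure_display} {T : measurableType d} {R : realType}.

(* The sigma-algebra on [T * R] is the product one, so measurability of [G]
   is obtained by sampling the second variable on the grid (1/(n+1)) Z. *)
Let grid (n : nat) (y : R) : R := (Num.floor (n.+1%:R * y))%:~R / n.+1%:R.

Let measurable_floor_eq (m : R) (k : int) :
  measurable [set y : R | Num.floor (m * y) = k].
Proof.
have -> : [set y : R | Num.floor (m * y) = k] =
    (fun y => m * y) @^-1` `[k%:~R, (k + 1)%:~R[.
  apply/seteqP; split => y /=.
    by move=> <-; rewrite in_itv /= floor_le floorD1_gt.
  by rewrite in_itv /= => yk; apply/eqP; rewrite floor_eq yk.
by rewrite -[_ @^-1` _]setTI; exact: mulrl_measurable.
Qed.

Let grid_cvg (y : R) : grid n y @[n --> \oo] --> y.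
Proof.
apply/cvgrPdist_le => e e0; near=> n.
have n_gt0 : 0 < n.+1%:R :> R by [].
have fl_le := floor_le (n.+1%:R * y).
have fl_gt := floorD1_gt (n.+1%:R * y); rewrite intrD in fl_gt.
have -> : y - grid n y = (n.+1%:R * y - (Num.floor (n.+1%:R * y))%:~R) / n.+1%:R.
  by rewrite /grid; field; rewrite gt_eqF.
rewrite ger0_norm; last by rewrite divr_ge0 ?subr_ge0 // ltW.
apply: (le_trans _ (ltW (_ : n.+1%:R^-1 < e))).
  by rewrite ler_pdivrMr // mulVf ?gt_eqF //; lra.
by near: n; exact: near_infty_natSinv_lt (PosNum e0).
Unshelve. all: by end_near.
Qed.

Lemma caratheodory_measurable_fun (G : T * R -> R) :
  (forall y, measurable_fun setT (fun x => G (x, y))) ->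
  (forall x, continuous (fun y => G (x, y))) ->
  measurable_fun setT G.
Proof.
move=> mG cG; apply: (measurable_fun_cvg (h := fun n z => G (z.1, grid n z.2))).
- move=> n _ A mA; rewrite setTI.
  have -> : (fun z => G (z.1, grid n z.2)) @^-1` A = \bigcup_(k : int)
      ((fun x => G (x, k%:~R / n.+1%:R)) @^-1` A `*`
       [set y | Num.floor (n.+1%:R * y) = k]).
    apply/seteqP; split => [[x y] /= GA|[x y] [k _ /= [GA yk]]].
      by exists (Num.floor (n.+1%:R * y)).
    by rewrite /grid /= yk.
  apply: countable_bigcupT_measurable => // k.
  apply: measurableX; last exact: measurable_floor_eq.
  by rewrite -[_ @^-1` _]setTI; exact: mG.
- by move=> [x y] _ /=; exact: (cvg_comp _ _ (grid_cvg y) (cG x y)).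
Qed.

End caratheodory.

Lemma continuous_sectionl {U V W : topologicalType} (f : U * V -> W) (v : V) :
  continuous f -> continuous (fun u => f (u, v)).
Proof.
move=> cf u; apply: continuous_comp (cf (u, v)).
by apply: cvg_pair => //; exact: cvg_cst.
Qed.

Lemma continuous_sectionr {U V W : topologicalType} (f : U * V -> W) (u : U) :
  continuous f -> continuous (fun v => f (u, v)).
Proof. by move=> cf; exact: (continuous_curry cf).2. Qed.

Lemma continuous_sqr {T : topologicalType} {R : realType} (f : T -> R) :
  continuous f -> continuous (fun x => f x ^+ 2).
Proof.
move=> cf x; apply: (@continuous_comp _ _ _ f (fun y => y ^+ 2)); first exact: cf.
exact: exprn_continuous.
Qed.

Lemma continuous_measurable_fun_pair {R : realType} (G : R * R -> R) :
  continuous G -> measurable_fun setT G.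
Proof.
move=> cG; apply: caratheodory_measurable_fun => [y|x].
  by apply: continuous_measurable_fun; exact: continuous_sectionl.
exact: continuous_sectionr.
Qed.

Section lebesgue_integral_facts.
Context {R : realType}.
Local Notation mu := (@lebesgue_measure R).
Local Open Scope ereal_scope.

Lemma ge0_integral_ge_ball (f : R -> \bar R) (a e c : R) :
  (0 <= c)%R -> (0 <= e)%R -> measurable_fun setT f -> (forall x, 0 <= f x) ->
  (forall x, ball a e x -> c%:E <= f x) ->
  (c * e *+ 2)%:E <= \int[mu]_x f x.
Proof.
move=> c0 e0 mf f0 fc.
have mball : measurable (ball a e) by exact: measurable_ball.
apply: le_trans (ge0_subset_integral mu mball measurableT mf (fun x _ => f0 x)
  (@subsetT _ _)).
rewrite -mulrnAr EFinM -(lebesgue_measure_ball a e0) -integral_cst //.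
apply: ge0_le_integral => //.
exact: measurable_funS measurableT (@subsetT _ _) mf.
Qed.

Lemma continuous_ge0_integral2_eq0 (F : R * R -> R) :
  continuous F -> (forall z, (0 <= F z)%R) ->
  \int[mu]_y \int[mu]_x (F (x, y))%:E = 0 -> forall z, F z = 0%R.
Proof.
move=> cF F0 IF0 [a b]; apply/eqP; rewrite eq_le F0 andbT leNgt.
apply/negP => Fab; set c := (F (a, b) / 2)%R.
have c0 : (0 < c)%R by rewrite divr_gt0.
have : \forall z \near (a, b), (c < F z)%R.
  by apply: (cvgr_gt (F (a, b)) (cF (a, b))); rewrite /c; lra.
move=> /(nbhs_ballP _ _).1 [e /= e0 Fc].
have mF : measurable_fun setT (fun z => (F z)%:E).
  by apply/measurable_EFinP; exact: continuous_measurable_fun_pair.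
have inner_ge0 y : 0 <= \int[mu]_x (F (x, y))%:E.
  by apply: integral_ge0 => x _; rewrite lee_fin.
have inner_lb y : ball b e y -> (c * e *+ 2)%:E <= \int[mu]_x (F (x, y))%:E.
  move=> bye; apply: (ge0_integral_ge_ball _ a _ _ (ltW c0) (ltW e0)).
  - apply/measurable_EFinP; apply: continuous_measurable_fun.
    exact: continuous_sectionl.
  - by move=> x; rewrite lee_fin.
  - by move=> x bxe; rewrite lee_fin ltW //; apply: (Fc (x, y)).
have : (c * e *+ 2 * e *+ 2)%:E <= 0.
  rewrite -IF0; apply: (ge0_integral_ge_ball _ b _ _ _ (ltW e0) _ inner_ge0 inner_lb).
  - by rewrite pmulrn_lge0 // mulr_ge0 // ltW.
  - apply: (measurable_fun_fubini_tonelli_G (m1 := mu) _ mF) => z.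
    by rewrite lee_fin.
by rewrite lee_fin leNgt pmulrn_lgt0 // mulr_gt0 // pmulrn_lgt0 // mulr_gt0.
Qed.

Lemma integral_neq0_exists_neq (g : R -> R) (a : R) :
  measurable_fun setT g -> \int[mu]_x (g x)%:E != 0 ->
  exists2 x, x != a & g x != 0%R.
Proof.
move=> mg; apply: contraNP => g0; apply/eqP.
rewrite -(@integral_setD1 _ _ a) ?integral0_eq //.
- move=> x [_ /eqP xa] /=; apply/eqP; rewrite eqe.
  by apply: contra_notT g0 => gx0; exists x.
- exact: measurableD.
- by apply/measurable_EFinP; exact: measurable_funS mg.
Qed.

Lemma gauss_fun_shift_continuous (m : R) :
  continuous (fun x : R => gauss_fun (x - m)).
Proof.
move=> x; apply: continuous_comp; last exact: continuous_gauss_fun.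
by apply: cvgB; [exact: cvg_id | exact: cvg_cst].
Qed.

Lemma gauss_fun_shift_integral_lty (m : R) :
  \int[mu]_x (gauss_fun (x - m))%:E < +oo.
Proof.
have peak_gt0 : (0 < normal_peak (1 : R))%R by rewrite normal_peak_gt0 ?oner_eq0.
have gauss_le x : (gauss_fun (x - m) <= (normal_peak 1)^-1 * normal_pdf m 1 x)%R.
  rewrite /normal_pdf oner_eq0 /normal_fun expr1n mulrA mulVf ?gt_eqF // mul1r.
  by rewrite /gauss_fun ler_expR; have := sqr_ge0 (x - m); lra.
apply: (@le_lt_trans _ _ (\int[mu]_x ((normal_peak 1)^-1 * normal_pdf m 1 x)%:E)).
  apply: ge0_le_integral => //.
  - by move=> x _; rewrite lee_fin gauss_fun_ge0.
  - apply/measurable_EFinP; apply: continuous_measurable_fun.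
    exact: gauss_fun_shift_continuous.
  - apply/measurable_EFinP; apply: measurable_funM => //.
    exact: measurable_normal_pdf.
  - by move=> x _; rewrite lee_fin gauss_le.
under eq_integral do rewrite EFinM.
rewrite ge0_integralZl ?integral_normal_pdf ?mule1 ?ltry //.
- by apply/measurable_EFinP; exact: measurable_normal_pdf.
- by move=> x _; rewrite lee_fin normal_pdf_ge0.
- by rewrite lee_fin invr_ge0 ltW.
Qed.

End lebesgue_integral_facts.

Section invariant_ratio.
Context {R : realType}.
Local Notation mu := (@lebesgue_measure R).
Local Open Scope ereal_scope.

Variable Psi : R -> R -> R.
Hypothesis Psi_cont : continuous (fun z : R * R => Psi z.1 z.2).
Hypothesis Psi_ge0 : forall v u, (0 <= Psi v u)%R.
Hypothesis Psi_mass1 : forall u, \int[mu]_v (Psi v u)%:E = 1.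

Variables r q : R -> R.
Hypotheses (r_cont : continuous r) (q_cont : continuous q).
Hypotheses (r_gt0 : forall u, (0 < r u)%R) (q_ge0 : forall u, (0 <= q u)%R).
Hypothesis q_integral_lty : \int[mu]_u (q u)%:E < +oo.
Hypothesis r_invariant : forall v, \int[mu]_u (r u * Psi v u)%:E = (r v)%:E.
Hypothesis q_invariant : forall v, \int[mu]_u (q u * Psi v u)%:E = (q v)%:E.

Let Psi_cont_in_u v : continuous (fun u => Psi v u).
Proof. exact: (continuous_sectionr (fun z : R * R => Psi z.1 z.2) v Psi_cont). Qed.

Let Psi_cont_in_v u : continuous (fun v => Psi v u).
Proof. exact: (continuous_sectionl (fun z : R * R => Psi z.1 z.2) u Psi_cont). Qed.

Let Psi_swap_cont : continuous (fun z : R * R => Psi z.2 z.1).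
Proof.
move=> z; apply: (@continuous_comp _ _ _ (fun z : R * R => (z.2, z.1))
  (fun z : R * R => Psi z.1 z.2)); last exact: Psi_cont.
exact: cvg_pair cvg_snd cvg_fst.
Qed.

Let p u := (r u + q u)%R.

Let p_cont : continuous p.
Proof. by move=> u; apply: cvgD; [exact: r_cont | exact: q_cont]. Qed.

Let p_gt0 u : (0 < p u)%R. Proof. by rewrite ltr_wpDr. Qed.

Let p_invariant v : \int[mu]_u (p u * Psi v u)%:E = (p v)%:E.
Proof.
have mPsi (f : R -> R) : continuous f ->
    measurable_fun setT (fun u => (f u * Psi v u)%:E).
  move=> cf; apply/measurable_EFinP; apply: continuous_measurable_fun => u.
  by apply: cvgM; [exact: cf | exact: Psi_cont_in_u].
under eq_integral do rewrite mulrDl EFinD.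
rewrite ge0_integralD ?r_invariant ?q_invariant //.
- by move=> u _; rewrite lee_fin mulr_ge0 // ltW.
- exact: mPsi.
- by move=> u _; rewrite lee_fin mulr_ge0.
- exact: mPsi.
Qed.

Let h u := (q u / p u)%R.

Let h_ge0 u : (0 <= h u)%R. Proof. by rewrite divr_ge0 // ltW. Qed.

Let h_le1 u : (h u <= 1)%R.
Proof. by rewrite ler_pdivrMr // mul1r lerDr ltW. Qed.

Let h_cont : continuous h.
Proof.
move=> u; apply: (continuousM (q_cont u)).
by apply: continuousV; [rewrite gt_eqF | exact: p_cont].
Qed.

Let mass u := (p u * h u ^+ 2)%R.

Let mass_ge0 u : (0 <= mass u)%R. Proof. by rewrite mulr_ge0 ?sqr_ge0 // ltW. Qed.

Let mass_cont : continuous mass.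
Proof.
move=> u; apply: (continuousM (p_cont u)).
exact: (continuous_sqr _ h_cont u).
Qed.

Let mass_integral_lty : \int[mu]_u (mass u)%:E < +oo.
Proof.
apply: le_lt_trans q_integral_lty; apply: ge0_le_integral => //.
- by move=> u _; rewrite lee_fin.
- by apply/measurable_EFinP; exact: continuous_measurable_fun.
- by apply/measurable_EFinP; exact: continuous_measurable_fun.
move=> u _; rewrite lee_fin.
have -> : mass u = (q u * h u)%R by rewrite /mass /h; field; rewrite gt_eqF.
by rewrite ler_piMr.
Qed.

Let dirichlet (z : R * R) := (p z.1 * Psi z.2 z.1 * (h z.1 - h z.2) ^+ 2)%R.

Let dirichlet_ge0 z : (0 <= dirichlet z)%R.
Proof. by rewrite mulr_ge0 ?sqr_ge0 // mulr_ge0 // ltW. Qed.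

Let dirichlet_cont : continuous dirichlet.
Proof.
have h_gap_cont : continuous (fun z : R * R => h z.1 - h z.2)%R.
  move=> z; apply: cvgB.
  - exact: (@continuous_comp _ _ _ fst h z cvg_fst (h_cont _)).
  - exact: (@continuous_comp _ _ _ snd h z cvg_snd (h_cont _)).
move=> z; apply: cvgM; last exact: continuous_sqr _ h_gap_cont z.
apply: cvgM; last exact: Psi_swap_cont.
exact: (@continuous_comp _ _ _ fst p z cvg_fst (p_cont _)).
Qed.

Let integral_add_scaled_Psi (g f : R -> R) (c v : R) :
  continuous g -> continuous f -> (forall u, 0 <= g u)%R ->
  (forall u, 0 <= f u)%R -> (0 <= c)%R ->
  \int[mu]_u (g u + f u * Psi v u * c)%:E =
  \int[mu]_u (g u)%:E + \int[mu]_u (f u * Psi v u)%:E * c%:E.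
Proof.
move=> cg cf g0 f0 c0.
have cfPsi : continuous (fun u => f u * Psi v u)%R.
  by move=> u; apply: cvgM; [exact: cf | exact: Psi_cont_in_u].
have fPsi0 u : (0 <= f u * Psi v u)%R by rewrite mulr_ge0.
under eq_integral do rewrite EFinD EFinM.
rewrite ge0_integralD //.
- rewrite ge0_integralZr //.
    by apply/measurable_EFinP; exact: continuous_measurable_fun.
  by move=> u _; rewrite lee_fin.
- by move=> u _; rewrite lee_fin.
- by apply/measurable_EFinP; exact: continuous_measurable_fun.
- by move=> u _; rewrite -EFinM lee_fin mulr_ge0.
- apply: emeasurable_funM => //.
  by apply/measurable_EFinP; exact: continuous_measurable_fun.
Qed.

Let dirichlet_fiber v :
  \int[mu]_u (dirichlet (u, v))%:E + (mass v)%:E =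
  \int[mu]_u (mass u * Psi v u)%:E.
Proof.
have expand u : (dirichlet (u, v) + q u * Psi v u * (h v *+ 2) =
    mass u * Psi v u + p u * Psi v u * h v ^+ 2)%R.
  by rewrite /dirichlet /mass /h /=; field; rewrite !gt_eqF.
have : \int[mu]_u (dirichlet (u, v) + q u * Psi v u * (h v *+ 2))%:E =
       \int[mu]_u (mass u * Psi v u + p u * Psi v u * h v ^+ 2)%:E.
  by apply: eq_integral => u _; rewrite expand.
rewrite !integral_add_scaled_Psi //; first last.
- by rewrite mulrn_wge0.
- exact: continuous_sectionl.
- exact: sqr_ge0.
- by move=> u; rewrite ltW.
- by move=> u; rewrite mulr_ge0.
- by move=> u; apply: cvgM; [exact: mass_cont | exact: Psi_cont_in_u].
rewrite q_invariant p_invariant -!EFinM.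
have -> : (q v * (h v *+ 2) = mass v + mass v)%R.
  by rewrite /mass /h; field; rewrite gt_eqF.
rewrite EFinD addeA => split_eq.
by rewrite -[RHS](@addeK _ (mass v)%:E) // -split_eq addeK.
Qed.

Let dirichlet_integral_eq0 :
  \int[mu]_v \int[mu]_u (dirichlet (u, v))%:E = 0.
Proof.
have mdir : measurable_fun setT (fun z => (dirichlet z)%:E).
  by apply/measurable_EFinP; exact: continuous_measurable_fun_pair.
have mmass : measurable_fun setT (fun z : R * R => (mass z.1 * Psi z.2 z.1)%:E).
  apply/measurable_EFinP; apply: continuous_measurable_fun_pair => z.
  apply: cvgM; last exact: Psi_swap_cont.
  exact: (@continuous_comp _ _ _ fst mass z cvg_fst (mass_cont _)).
have mass_Psi_mass1 u : \int[mu]_v (mass u * Psi v u)%:E = (mass u)%:E.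
  under eq_integral do rewrite EFinM.
  rewrite ge0_integralZl ?Psi_mass1 ?mule1 ?lee_fin //.
  - apply/measurable_EFinP; apply: continuous_measurable_fun.
    exact: Psi_cont_in_v.
  - by move=> v _; rewrite lee_fin.
have fibers : \int[mu]_v (\int[mu]_u (dirichlet (u, v))%:E + (mass v)%:E) =
    \int[mu]_v \int[mu]_u (mass u * Psi v u)%:E.
  by apply: eq_integral => v _; exact: dirichlet_fiber.
rewrite -(fubini_tonelli (m1 := mu) (m2 := mu) _ mmass) in fibers; last first.
  by move=> z; rewrite lee_fin mulr_ge0.
have inner_mass : \int[mu]_u \int[mu]_v (mass u * Psi v u)%:E =
    \int[mu]_u (mass u)%:E.
  by apply: eq_integral => u _; exact: mass_Psi_mass1.
rewrite inner_mass ge0_integralD // in fibers; last 4 first.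
- by move=> v _; apply: integral_ge0 => u _; rewrite lee_fin.
- apply: (measurable_fun_fubini_tonelli_G (m1 := mu) _ mdir) => z.
  by rewrite lee_fin.
- by move=> v _; rewrite lee_fin.
- by apply/measurable_EFinP; exact: continuous_measurable_fun.
have mass_fin : \int[mu]_u (mass u)%:E \is a fin_num.
  by rewrite ge0_fin_numE // integral_ge0 // => u _; rewrite lee_fin.
move/(congr1 (fun x => x - \int[mu]_u (mass u)%:E)): fibers.
by rewrite addeK // subee.
Qed.

Lemma invariant_ratio_transition u v :
  (0 < Psi v u)%R -> (q u / (r u + q u) = q v / (r v + q v))%R.
Proof.
move=> Psi_vu_gt0.
have := continuous_ge0_integral2_eq0 _ dirichlet_cont dirichlet_ge0
  dirichlet_integral_eq0 (u, v).
rewrite /dirichlet /= => /eqP.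
rewrite mulf_eq0 sqrf_eq0 mulf_eq0 subr_eq0.
by rewrite (gt_eqF (p_gt0 u)) (gt_eqF Psi_vu_gt0) => /eqP.
Qed.

End invariant_ratio.

Section fU_facts.
Context {R : realType}.
Local Notation mu := (@lebesgue_measure R).
Local Open Scope ereal_scope.

Let fU_coef : R := (1 / 2) / Num.sqrt (2 * pi).

Let fU_coef_gt0 : (0 < fU_coef)%R.
Proof. by rewrite divr_gt0 // sqrtr_gt0 mulr_gt0 // pi_gt0. Qed.

Let fU_gauss (x1 x : R) :
  fU x1 x = (fU_coef * gauss_fun (x - 2 * x1) + fU_coef * gauss_fun (x - 0))%R.
Proof. by rewrite subr0. Qed.

Lemma fU_gt0 (x1 x : R) : (0 < fU x1 x)%R.
Proof. by rewrite fU_gauss addr_gt0 // mulr_gt0 // expR_gt0. Qed.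

Lemma fU_continuous (x1 : R) : continuous (fU x1).
Proof.
rewrite (funext (fU_gauss x1)) => x.
by apply: cvgD; apply: cvgM; first [exact: cvg_cst | exact: gauss_fun_shift_continuous].
Qed.

Lemma fU_integral_lty (x1 : R) : \int[mu]_x (fU x1 x)%:E < +oo.
Proof.
have mgauss (m : R) : measurable_fun setT (fun x : R => (gauss_fun (x - m))%:E).
  apply/measurable_EFinP; apply: continuous_measurable_fun.
  exact: gauss_fun_shift_continuous.
have coef_ge0 : 0 <= fU_coef%:E by rewrite lee_fin ltW.
have gauss_ge0 (m x : R) : 0 <= (gauss_fun (x - m))%:E.
  by rewrite lee_fin gauss_fun_ge0.
under eq_integral do rewrite fU_gauss EFinD !(EFinM fU_coef).
rewrite ge0_integralD //; first last.
- by apply: emeasurable_funM; [exact: measurable_cst | exact: mgauss].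
- by move=> x _; rewrite mule_ge0.
- by apply: emeasurable_funM; [exact: measurable_cst | exact: mgauss].
- by move=> x _; rewrite mule_ge0.
rewrite !ge0_integralZl //; [|exact: mgauss..].
apply: lte_add_pinfty; apply: lte_mul_pinfty => //.
all: exact: gauss_fun_shift_integral_lty.
Qed.

Lemma fU_ratio_eq0 (v : R) :
  (fU 1 0 / (fU (-1) 0 + fU 1 0) = fU 1 v / (fU (-1) v + fU 1 v))%R -> v = 0%R.
Proof.
have fU_sym0 : fU (-1) 0 = fU 1 (0 : R).
  by rewrite /fU; congr (_ * expR _ + _)%R; ring.
have fU_add_neq0 (x1 x y : R) : (fU x1 x + fU 1 y != 0)%R.
  by rewrite gt_eqF // addr_gt0 ?fU_gt0.
rewrite fU_sym0 => /eqP; rewrite eqr_div // => /eqP cross.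
have : fU (-1) v = fU 1 v.
  by apply: (mulfI (lt0r_neq0 (fU_gt0 1 0))); move: cross; lra.
rewrite /fU => /addIr /(mulfI (lt0r_neq0 fU_coef_gt0)) /expR_inj /oppr_inj /eqP.
by rewrite eqf_sqr => /orP [] /eqP; lra.
Qed.

End fU_facts.

Theorem proposition1 (R : realType) :
  ~ exists Psi : R -> R -> R,
      continuous (fun p : R * R => Psi p.1 p.2) /\
      (forall v u, 0 <= Psi v u) /\
      (forall u, is_pdf (fun v => Psi v u)) /\
      (exists c : R, 0 < c /\
         forall u, (c%:E <= \int[(@lebesgue_measure R)]_(t in setT)
            ((fine (\int[(@lebesgue_measure R)]_(v in `]-oo, t]) (Psi v u)%:E)
              - Phi (t - u)) ^+ 2)%:E)%E) /\
      (forall x1 v : R, (x1 = -1 \/ x1 = 1) ->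
         (\int[(@lebesgue_measure R)]_(u in setT) (fU x1 u * Psi v u)%:E
          = (fU x1 v)%:E)%E).
Proof.
move=> [Psi [Psi_cont [Psi_ge0 [Psi_pdf [_ Psi_invariant]]]]].
have Psi_mass1 u : (\int[lebesgue_measure]_v (Psi v u)%:E = 1)%E.
  by case: (Psi_pdf u) => _ [].
have [v0 v0_neq0 Psi_v0_neq0] : exists2 v, v != 0 & Psi v 0 != 0.
  apply: integral_neq0_exists_neq; first by case: (Psi_pdf 0) => _ [].
  by rewrite Psi_mass1 onee_neq0.
have Psi_v0_gt0 : 0 < Psi v0 0 by rewrite lt_neqAle eq_sym Psi_v0_neq0 Psi_ge0.
move/eqP: v0_neq0; apply; apply: fU_ratio_eq0.
apply: (invariant_ratio_transition _ Psi_cont Psi_ge0 Psi_mass1 _ _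
  (fU_continuous (-1)) (fU_continuous 1) (fU_gt0 (-1)) (fun u => ltW (fU_gt0 1 u))
  (fU_integral_lty 1) _ _ _ _ Psi_v0_gt0).
- by move=> v; apply: Psi_invariant; left.
- by move=> v; apply: Psi_invariant; right.
Qed.
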